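(* Let $p_{XYZ}$ be a joint distribution on finite sets in normal form. In any secure sampling protocol $\Pi(p_{XYZ})$, $H(X|M_{12},M_{31})=0$, $H(Y|M_{12},M_{23})=0$ and $H(Z|M_{23},M_{31})=0$.
   Context: Secure sampling: three parties Alice (1), Bob (2), Charlie (3) receive no inputs; each has private randomness, they exchange messages over multiple rounds on three pairwise private links (each message a codeword of a prefix-free code determined by previous messages on that link; termination with probability 1), and at the end Alice outputs $X$, Bob $Y$, Charlie $Z$. $M_{12},M_{23},M_{31}$ are the final transcripts on the Alice–Bob, Bob–Charlie, Charlie–Alice links. The protocol $\Pi(p_{XYZ})$ is a secure sampling protocol for $p_{XYZ}$ if $(X,Y,Z)\sim p_{XYZ}$ and the Markov chains $(M_{12},M_{31})-X-(Y,Z)$, $(M_{12},M_{23})-Y-(X,Z)$, $(M_{23},M_{31})-Z-(X,Y)$ hold. Normal form: $p_{XYZ}$ is in normal form if whenever $x,x'$ satisfy $p(x,y,z)=c\,p(x',y,z)$ for all $y,z$ for some constant $c\ge0$ then $x=x'$, and similarly for $y,y'$ and for $z,z'$. *)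

From HB Require Import structures.
From mathcomp Require Import all_boot all_order all_algebra.
From mathcomp Require Import all_classical all_reals all_analysis.
Set Implicit Arguments. Unset Strict Implicit. Unset Printing Implicit Defensive.
Import Order.TTheory GRing.Theory Num.Theory.
Local Open Scope classical_set_scope.
Local Open Scope ring_scope.

Inductive party := Alice | Bob | Charlie.
Inductive link := L12 | L23 | L31.

Definition link_eqb (l l' : link) : bool :=
  match l, l' with
  | L12, L12 | L23, L23 | L31, L31 => true
  | _, _ => false
  end.

Definition endpoint (l : link) (b : bool) : party :=
  match l, b with
  | L12, false => Alice   | L12, true => Bob
  | L23, false => Bob     | L23, true => Charlie
  | L31, false => Charlie | L31, true => Alice
  end.

Definition lnk1 (i : party) : link :=
  match i with Alice => L12 | Bob => L12 | Charlie => L23 end.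
Definition lnk2 (i : party) : link :=
  match i with Alice => L31 | Bob => L23 | Charlie => L31 end.

(* A link history is the list of messages (bit strings) exchanged so far on
   that link, in chronological order, in both directions.
   [U] is the type of the private randomness of each party.
   - at step t, the message is sent on link (sched t).1 by the endpoint
     selected by (sched t).2 (a fixed, arbitrary schedule of speakers);
   - [code l h] is the prefix-free code used for the next message on link l
     when the history of l is h;
   - [stop l h] : link l is finished once its history is h (no more messages);
   - [msg i t r h1 h2] : message sent by party i at step t, given its private
     randomness r and the histories h1, h2 of its links lnk1 i, lnk2 i;
   - [out i r h1 h2] : output of party i given its final view. *)
Record protocol (U : Type) (Out : party -> finType) := Protocol {
  sched : nat -> link * bool;
  code : link -> seq (seq bool) -> set (seq bool);
  stop : link -> seq (seq bool) -> bool;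
  msg : party -> nat -> U -> seq (seq bool) -> seq (seq bool) -> seq bool;
  out : forall i : party, U -> seq (seq bool) -> seq (seq bool) -> Out i }.

Section Execution.
Context {U : Type} {Out : party -> finType} (Pi : protocol U Out).

Fixpoint hist (u : party -> U) (t : nat) : link -> seq (seq bool) :=
  match t with
  | 0 => fun _ => [::]
  | t'.+1 =>
    let h := hist u t' in
    let l := (sched Pi t').1 in
    let s := endpoint l (sched Pi t').2 in
    fun l' =>
      if link_eqb l' l && ~~ stop Pi l (h l)
      then rcons (h l) (msg Pi s t' (u s) (h (lnk1 s)) (h (lnk2 s)))
      else h l'
  end.

Definition terminated (u : party -> U) (t : nat) : bool :=
  [&& stop Pi L12 (hist u t L12), stop Pi L23 (hist u t L23)
    & stop Pi L31 (hist u t L31)].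

Definition final_hist (u : party -> U) (l : link) : seq (seq bool) :=
  hist u (xget 0%N [set t | terminated u t]) l.

Definition transcript (u : party -> U) (l : link) : seq bool :=
  flatten (final_hist u l).

Definition output (u : party -> U) (i : party) : Out i :=
  out Pi i (u i) (final_hist u (lnk1 i)) (final_hist u (lnk2 i)).

Definition prefix_free (C : set (seq bool)) : Prop :=
  forall a b, C a -> C b -> prefix a b -> a = b.

Definition wf_protocol : Prop :=
  (forall l h, prefix_free (code Pi l h)) /\
  (forall u t,
     let l := (sched Pi t).1 in
     let s := endpoint l (sched Pi t).2 in
     ~~ stop Pi l (hist u t l) ->
     code Pi l (hist u t l)
       (msg Pi s t (u s) (hist u t (lnk1 s)) (hist u t (lnk2 s)))).

End Execution.

Section Probability.
Context {R : realType} {d : measure_display} {T : measurableType d}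
        (P : probability T R).

Definition markov {TA TB TC : Type} (A : T -> TA) (B : T -> TB) (C : T -> TC)
  : Prop :=
  forall a b c,
    (P [set w | A w = a /\ B w = b /\ C w = c] * P [set w | B w = b] =
     P [set w | A w = a /\ B w = b] * P [set w | B w = b /\ C w = c])%E.

(* conditional entropy H(X|M) (in nats) of a finite-valued X given a
   discrete (countable-valued) M, with the convention 0 ln 0 = 0
   (ln 0 = 0 in mathcomp-analysis). *)
Definition cond_entropy {A : finType} {B : choiceType}
  (X : T -> A) (M : T -> B) : \bar R :=
  \esum_(xm in [set: A * B])
    (let pxm := fine (P [set w | X w = xm.1 /\ M w = xm.2]) in
     let pm := fine (P [set w | M w = xm.2]) in
     (- (pxm * ln (pxm / pm)))%:E).

Context {dU : measure_display} {U : measurableType dU}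
        (rnd : party -> T -> U) {Out : party -> finType}
        (Pi : protocol U Out).

Definition rv_out (i : party) (w : T) : Out i := output Pi (fun j => rnd j w) i.
Definition rv_tr (l : link) (w : T) : seq bool :=
  transcript Pi (fun j => rnd j w) l.

Definition measurable_protocol : Prop :=
  and (forall i t h1 h2 s, measurable [set r : U | msg Pi i t r h1 h2 = s])
      (forall i h1 h2 x, measurable [set r : U | out Pi i r h1 h2 = x]).

Definition protocol_setting : Prop :=
  [/\ (forall i, measurable_fun setT (rnd i)),
      (forall S1 S2 S3 : set U, measurable S1 -> measurable S2 ->
         measurable S3 ->
         P [set w | S1 (rnd Alice w) /\ S2 (rnd Bob w) /\ S3 (rnd Charlie w)] =
         (P [set w | S1 (rnd Alice w)] * P [set w | S2 (rnd Bob w)] *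
          P [set w | S3 (rnd Charlie w)])%E),
      measurable_protocol,
      wf_protocol Pi &
      P [set w | exists t, terminated Pi (fun j => rnd j w) t] = 1%E].

Definition secure_sampling
  (p : Out Alice -> Out Bob -> Out Charlie -> R) : Prop :=
  [/\ (forall x y z,
         P [set w | rv_out Alice w = x /\ rv_out Bob w = y /\
                    rv_out Charlie w = z] = (p x y z)%:E),
      markov (fun w => (rv_tr L12 w, rv_tr L31 w)) (rv_out Alice)
             (fun w => (rv_out Bob w, rv_out Charlie w)),
      markov (fun w => (rv_tr L12 w, rv_tr L23 w)) (rv_out Bob)
             (fun w => (rv_out Alice w, rv_out Charlie w)) &
      markov (fun w => (rv_tr L23 w, rv_tr L31 w)) (rv_out Charlie)
             (fun w => (rv_out Alice w, rv_out Bob w))].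

End Probability.

Definition is_distribution {R : realType} {A B C : finType}
  (p : A -> B -> C -> R) : Prop :=
  (forall x y z, 0 <= p x y z) /\ \sum_(x : A) \sum_(y : B) \sum_(z : C) p x y z = 1.

Definition normal_form {R : realType} {A B C : finType}
  (p : A -> B -> C -> R) : Prop :=
  [/\ (forall x x', (exists c : R, 0 <= c /\ forall y z, p x y z = c * p x' y z)
         -> x = x'),
      (forall y y', (exists c : R, 0 <= c /\ forall x z, p x y z = c * p x y' z)
         -> y = y') &
      (forall z z', (exists c : R, 0 <= c /\ forall x y, p x y z = c * p x y z')
         -> z = z')].

From Pilot Require Import Defs.
From HB Require Import structures.
From mathcomp Require Import all_boot all_order all_algebra.
From mathcomp Require Import all_classical all_reals all_analysis.
From mathcomp Require Import ring.
Import Defs.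
Set Implicit Arguments. Unset Strict Implicit. Unset Printing Implicit Defensive.

Import Order.TTheory GRing.Theory Num.Theory.
Local Open Scope classical_set_scope.

(* Fix the transcripts (m12, m31) on Alice's links.  Messages are codewords of
   prefix-free codes, so transcripts determine the message histories, and a run
   yields given transcripts and outputs exactly when each party's randomness
   lies in a set depending only on that party's links and output (the
   rectangle property of protocols).  Independent randomness then makes
   P(m12, m31, X = x, (Y,Z) = yz) a product alpha(x) g(yz) after summing over
   m23: given Alice's transcripts, X and (Y,Z) are independent.  Together with
   the Markov chain (M12,M31) - X - (Y,Z) this makes p(x,.,.) proportional to
   g for every x of positive conditional probability, so by normal form there
   is only one such x and H(X|M12,M31) = 0.  Bob and Charlie are symmetric. *)

Section Runs.
Context {U : Type} {Out : party -> finType} (Pi : protocol U Out).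
Implicit Types (u : party -> U) (l : link) (s : party) (H h : seq (seq bool)).

Lemma link_eqbP l l' : reflect (l = l') (link_eqb l l').
Proof. by apply: (iffP idP); case: l; case: l'. Qed.

Lemma link_eqbb l : link_eqb l l.
Proof. by case: l. Qed.

Lemma histS u t l : hist Pi u t.+1 l =
  let l0 := (sched Pi t).1 in let s := endpoint l0 (sched Pi t).2 in
  if link_eqb l l0 && ~~ stop Pi l0 (hist Pi u t l0)
  then rcons (hist Pi u t l0)
         (msg Pi s t (u s) (hist Pi u t (lnk1 s)) (hist Pi u t (lnk2 s)))
  else hist Pi u t l.
Proof. by []. Qed.

Lemma prefix_hist u t t' l : (t <= t')%N -> prefix (hist Pi u t l) (hist Pi u t' l).
Proof.
move=> /subnKC <-; elim: (t' - t)%N => [|n IH]; first by rewrite addn0 prefix_refl.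
rewrite addnS histS /=; case: ifP => [/andP[/link_eqbP El _]|_] //; subst l.
exact: prefix_trans IH (prefix_rcons _ _).
Qed.

Lemma terminated_stop u t l : terminated Pi u t -> stop Pi l (hist Pi u t l).
Proof. by case/and3P; case: l. Qed.

Lemma hist_terminated u t t' l : terminated Pi u t -> (t <= t')%N ->
  hist Pi u t' l = hist Pi u t l.
Proof.
move=> Tt /subnKC <-; elim: (t' - t)%N l => [|n IH] l; first by rewrite addn0.
by rewrite addnS histS /= !IH terminated_stop // andbF.
Qed.

Lemma prefix_hist_terminated u t t1 l : terminated Pi u t1 ->
  prefix (hist Pi u t l) (hist Pi u t1 l).
Proof.
move=> Tt1; case: (leqP t t1) => [|/ltnW t1t]; first exact: prefix_hist.
by rewrite (hist_terminated _ Tt1 t1t) prefix_refl.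
Qed.

Lemma prefix_rcons_nth (T : eqType) (x0 x : T) (a b : seq T) :
  prefix (rcons a x) b -> (size a < size b)%N /\ nth x0 b (size a) = x.
Proof.
move=> /prefixP [c ->]; rewrite size_cat size_rcons nth_cat size_rcons ltnSn.
by rewrite nth_rcons ltnn eqxx; split=> //; rewrite ltn_addr.
Qed.

(* The history of link [l] after [t] steps of a run whose final history on
   [l] is [H], computed from [H] alone. *)
Fixpoint replay l H t : seq (seq bool) :=
  if t is t'.+1 then
    let h := replay l H t' in
    if link_eqb l (sched Pi t').1 && ~~ stop Pi l h then take (size h).+1 H
    else h
  else [::].

Lemma replay_take l H t : exists j, replay l H t = take j H.
Proof.
elim: t => [|t [j IH]] /=; first by exists 0%N; rewrite take0.
by case: ifP => _; [exists (size (replay l H t)).+1 | exists j].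
Qed.

Definition legal_hist l H : Prop :=
  forall k, (k < size H)%N ->
    ~~ stop Pi l (take k H) /\ code Pi l (take k H) (nth [::] H k).

Definition complete_hist l H : Prop :=
  [/\ stop Pi l H, legal_hist l H & exists t, replay l H t = H].

Lemma replay_stop l H t : complete_hist l H -> stop Pi l (replay l H t) ->
  replay l H t = H.
Proof.
move=> [_ legH _]; have [j ->] := replay_take l H t.
case: (ltnP j (size H)) => jH; last by rewrite take_oversize.
by have [/negP] := legH j jH.
Qed.

Lemma replay_nstop l H t : complete_hist l H -> ~~ stop Pi l (replay l H t) ->
  (size (replay l H t) < size H)%N /\
  replay l H t = take (size (replay l H t)) H.
Proof.
move=> [stH _ _]; have [j ->] := replay_take l H t.
case: (ltnP j (size H)) => jH; last by rewrite take_oversize // stH.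
by rewrite size_take jH.
Qed.

Lemma replay_complete l H t t' : complete_hist l H -> replay l H t = H ->
  (t <= t')%N -> replay l H t' = H.
Proof.
move=> [stH _ _] E /subnKC <-; elim: (t' - t)%N => [|n IH]; first by rewrite addn0.
by rewrite addnS /= IH stH andbF.
Qed.

Lemma cat_prefix_total (T : eqType) (a b x y : seq T) : a ++ x = b ++ y ->
  prefix a b \/ prefix b a.
Proof.
move=> E; case: (leqP (size a) (size b)) => [ab | /ltnW ba]; [left | right].
  by rewrite prefixE -(takel_cat y ab) -E take_size_cat.
by rewrite prefixE -(takel_cat x ba) E take_size_cat.
Qed.

(* Legal histories sharing a prefix [g] that flatten to the same bit string
   after [g] coincide: prefix-freeness pins down each next codeword. *)
Lemma legal_flatten_inj l : (forall h, prefix_free (code Pi l h)) ->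
  forall S g S', stop Pi l (g ++ S) -> legal_hist l (g ++ S) ->
  stop Pi l (g ++ S') -> legal_hist l (g ++ S') ->
  flatten S = flatten S' -> S = S'.
Proof.
have ltg (g0 : seq (seq bool)) c0 S0 : (size g0 < size (g0 ++ c0 :: S0))%N.
  by rewrite size_cat /= addnS ltnS leq_addr.
move=> pf; elim=> [|c S IH] g [|c' S'] // stS legS stS' legS' /= Ef.
- have [/negP[]] := legS' _ (ltg g c' S').
  by rewrite take_size_cat // -(cats0 g).
- have [/negP[]] := legS _ (ltg g c S).
  by rewrite take_size_cat // -(cats0 g).
have codeword S0 c0 : legal_hist l (g ++ c0 :: S0) -> code Pi l g c0.
  move=> /(_ _ (ltg g c0 S0)) [_].
  by rewrite take_size_cat // nth_cat ltnn subnn.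
have ecc : c = c'.
  have [cg cg'] := (codeword _ _ legS, codeword _ _ legS').
  case: (cat_prefix_total Ef) => pr; first exact: pf g c c' cg cg' pr.
  exact/esym/(pf g c' c cg' cg pr).
subst c'; congr (_ :: _); apply: (IH (rcons g c)); rewrite ?cat_rcons //.
by have := congr1 (drop (size c)) Ef; rewrite !drop_size_cat.
Qed.

Lemma complete_hist_flatten_inj l H H' : (forall h, prefix_free (code Pi l h)) ->
  complete_hist l H -> complete_hist l H' -> flatten H = flatten H' -> H = H'.
Proof.
by move=> pf [stH legH _] [stH' legH' _]; exact: (legal_flatten_inj pf (g := [::])).
Qed.

Definition link_view s h1 h2 l := if link_eqb l (lnk1 s) then h1 else h2.

Lemma link_view_endpoint (H : link -> seq (seq bool)) l b :
  link_view (endpoint l b) (H (lnk1 (endpoint l b))) (H (lnk2 (endpoint l b))) l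
  = H l.
Proof. by case: l; case: b. Qed.

(* Party [s] with randomness [r] sends, at each of its turns, exactly the next
   message of the final histories [h1], [h2] of its two links. *)
Definition consistent s (r : U) h1 h2 : Prop :=
  forall t, endpoint (sched Pi t).1 (sched Pi t).2 = s ->
  ~~ stop Pi (sched Pi t).1
       (replay (sched Pi t).1 (link_view s h1 h2 (sched Pi t).1) t) ->
  msg Pi s t r (replay (lnk1 s) h1 t) (replay (lnk2 s) h2 t) =
  nth [::] (link_view s h1 h2 (sched Pi t).1)
    (size (replay (sched Pi t).1 (link_view s h1 h2 (sched Pi t).1) t)).

Lemma hist_legal u t l : wf_protocol Pi -> legal_hist l (hist Pi u t l).
Proof.
move=> [_ wf_msg]; elim: t l => [|t IH] l; first by [].
rewrite histS /=; case: ifP => [/andP[/link_eqbP -> ns] | _]; last exact: IH.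
move=> k; rewrite size_rcons ltnS leq_eqVlt -cats1 => /orP[/eqP -> | lt].
  rewrite take_size_cat // nth_cat ltnn subnn.
  by split; [exact: ns | exact: (wf_msg u t ns)].
by rewrite takel_cat ?(ltnW lt) // nth_cat lt; exact: IH.
Qed.

Lemma hist_replay u t1 t l : terminated Pi u t1 ->
  hist Pi u t l = replay l (hist Pi u t1 l) t.
Proof.
move=> Tt1; elim: t l => [|t IH] l //.
rewrite histS /= -!IH; case: (link_eqbP l (sched Pi t).1) => [-> | _] //=.
case: ifP => ns //; have := prefix_hist_terminated t.+1 (sched Pi t).1 Tt1.
by rewrite histS /= link_eqbb ns prefixE size_rcons => /eqP.
Qed.

Lemma terminated_consistent u t1 s : terminated Pi u t1 ->
  consistent s (u s) (hist Pi u t1 (lnk1 s)) (hist Pi u t1 (lnk2 s)).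
Proof.
move=> Tt1 t <-; rewrite !link_view_endpoint -!hist_replay // => ns.
have := prefix_hist_terminated t.+1 (sched Pi t).1 Tt1.
by rewrite histS /= link_eqbb ns => /(prefix_rcons_nth [::]) [_ ->].
Qed.

Lemma terminated_xget u : (exists t, terminated Pi u t) ->
  terminated Pi u (xget 0%N [set t | terminated Pi u t]).
Proof. by move=> ex; apply: (xgetPex 0%N ex). Qed.

Lemma consistent_hist_replay u (H : link -> seq (seq bool)) :
  (forall l, complete_hist l (H l)) ->
  (forall s, consistent s (u s) (H (lnk1 s)) (H (lnk2 s))) ->
  forall t l, hist Pi u t l = replay l (H l) t.
Proof.
move=> compH consH; elim=> [|t IH] l //.
rewrite histS /= !IH; case: (link_eqbP l (sched Pi t).1) => [-> | _] //=.
case: ifP => ns //.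
have := consH _ t erefl; rewrite !link_view_endpoint => /(_ ns) ->.
have [lt E] := replay_nstop (compH _) ns.
by rewrite (take_nth [::] lt) -E.
Qed.

Lemma run_spec u (H : link -> seq (seq bool)) : wf_protocol Pi ->
  ((exists t, terminated Pi u t) /\ forall l, final_hist Pi u l = H l) <->
  (forall l, complete_hist l (H l)) /\
  (forall s, consistent s (u s) (H (lnk1 s)) (H (lnk2 s))).
Proof.
move=> wf; split=> [[/terminated_xget Tt1 /funext <-] | [compH consH]].
  split=> [l | s]; last exact: terminated_consistent.
  split; [exact: terminated_stop | exact: hist_legal |].
  by exists (xget 0%N [set t | terminated Pi u t]); rewrite -hist_replay.
have E := consistent_hist_replay compH consH.
have reach l : exists t, forall t', (t <= t')%N -> replay l (H l) t' = H l.
  by have [_ _ [t Et]] := compH l; exists t => t'; exact: replay_complete.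
have [[t12 E12] [t23 E23]] := (reach L12, reach L23); have [t31 E31] := reach L31.
have Tt : terminated Pi u (t12 + t23 + t31).
  rewrite /terminated !E (E12 _ (leq_trans (leq_addr t23 _) (leq_addr t31 _))).
  rewrite (E23 _ (leq_trans (leq_addl t12 _) (leq_addr t31 _))) (E31 _ (leq_addl _ _)).
  by have [[? _ _] [? _ _]] := (compH L12, compH L23); have [? _ _] := compH L31;
    apply/and3P.
have ex : exists t, terminated Pi u t by exists (t12 + t23 + t31)%N.
split=> // l; have := terminated_stop l (terminated_xget ex).
by rewrite /final_hist E => /replay_stop; apply.
Qed.

Lemma terminating_run_spec u : wf_protocol Pi -> (exists t, terminated Pi u t) ->
  (forall l, complete_hist l (final_hist Pi u l)) /\
  (forall s, consistent s (u s) (final_hist Pi u (lnk1 s)) (final_hist Pi u (lnk2 s))).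
Proof. by move=> wf Tu; apply/(run_spec u (final_hist Pi u) wf). Qed.

End Runs.

Section DiscreteRandomVariables.
Context {R : realType} {d : measure_display} {T : measurableType d}
  (P : probability T R).
Local Open Scope ring_scope.
Local Open Scope ereal_scope.

Definition measurable_fibers {V : Type} (f : T -> V) : Prop :=
  forall v, measurable [set w | f w = v].

Lemma measurable_fiberI {V W : Type} (f : T -> V) (g : T -> W) v v' :
  measurable_fibers f -> measurable_fibers g ->
  measurable [set w | f w = v /\ g w = v'].
Proof. by move=> mf mg; exact: measurableI (mf v) (mg v'). Qed.

Lemma measurable_fibers_pair {V W : Type} (f : T -> V) (g : T -> W) :
  measurable_fibers f -> measurable_fibers g ->
  measurable_fibers (fun w => (f w, g w)).
Proof.
move=> mf mg [v v']; rewrite (_ : [set w | _] = [set w | f w = v /\ g w = v']).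
  exact: measurable_fiberI.
by apply/seteqP; split=> w /= [] -> ->.
Qed.

Definition csum {V : countType} (a : V -> \bar R) : \bar R :=
  \sum_(n <oo) (if pickle_inv n is Some v then a v else 0).

Lemma csumZl {V : countType} (x : \bar R) (a : V -> \bar R) :
  x \is a fin_num -> (forall v, 0 <= a v) -> csum (fun v => x * a v) = x * csum a.
Proof.
move=> /fineK <- a0; rewrite /csum -nneseriesZl; last by move=> n _; case: pickle_inv.
by apply: eq_eseriesr => n _; case: pickle_inv => [v|]; rewrite ?mule0.
Qed.

Lemma measure_csum_fibers {V : countType} (Z : T -> V) (F : set T) :
  measurable_fibers Z -> measurable F ->
  P F = csum (fun v => P (F `&` [set w | Z w = v])).
Proof.
move=> mZ mF.
pose G n := if pickle_inv n is Some v then F `&` [set w | Z w = v] else set0.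
have FG : F = \bigcup_n G n.
  apply/seteqP; split=> [w Fw | w [n _]].
    by exists (pickle (Z w)) => //; rewrite /G pickleK_inv.
  by rewrite /G; case: pickle_inv => // v [].
rewrite {1}FG measure_semi_bigcup.
- by apply: eq_eseriesr => n _; rewrite /G; case: pickle_inv.
- by move=> n; rewrite /G; case: pickle_inv => // v; exact: measurableI.
- move=> n n' _ _ [w []]; rewrite /G.
  case En: (pickle_inv n) => [v|] // [_ Zv].
  case En': (pickle_inv n') => [v'|] // [_ Zv'].
  by rewrite -(@pickle_invK V n) -(@pickle_invK V n') En En' /= -Zv -Zv'.
- apply: bigcupT_measurable => n.
  by rewrite /G; case: pickle_inv => // v; exact: measurableI.
Qed.

Lemma cond_entropy_eq0 (A : finType) (B : choiceType) (X : T -> A) (M : T -> B) :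
  measurable_fibers X -> measurable_fibers M ->
  (forall b x x', 0 < P [set w | X w = x /\ M w = b] ->
     0 < P [set w | X w = x' /\ M w = b] -> x = x') ->
  cond_entropy P X M = 0.
Proof.
move=> mX mM uniqX; apply: esum1 => -[x b] _ /=.
have mXM x' : measurable [set w | X w = x' /\ M w = b] by exact: measurable_fiberI.
have := measure_ge0 P [set w | X w = x /\ M w = b].
rewrite le_eqVlt => /orP[/eqP <- | pos]; first by rewrite /= mul0r oppr0.
have -> : P [set w | M w = b] = P [set w | X w = x /\ M w = b].
  have -> : [set w | M w = b] = \bigcup_(x' in [set: A]) [set w | X w = x' /\ M w = b].
    by apply/seteqP; split=> [w Mw | w [x' _ []]]; first by exists (X w).
  rewrite measure_fin_bigcup //; last 2 first.
  - exact: finite_finset.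
  - by move=> x1 x2 _ _ [w [[<- _] [<- _]]].
  rewrite (fsbigD1 x) ?finite_finset //= fsbig1 ?adde0 // => x' [_ x'x].
  have := measure_ge0 P [set w | X w = x' /\ M w = b].
  rewrite le_eqVlt => /orP[/eqP <- // | pos'].
  by case: x'x; exact: uniqX b _ _ pos' pos.
have p0 : (0 < fine (P [set w | X w = x /\ M w = b]))%R.
  by rewrite -lte_fin fineK // fin_num_measure.
by rewrite divff ?gt_eqF // ln1 mulr0 oppr0.
Qed.

Lemma measure_fin_numE (S : set T) : measurable S -> exists r, P S = r%:E.
Proof. by move=> mS; exists (fine (P S)); rewrite fineK // fin_num_measure. Qed.

Section Markov.
Variables (A B C : Type) (M : T -> B) (X : T -> A) (Y : T -> C).
Hypotheses (markovMXY : markov P M X Y) (mM : measurable_fibers M)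
  (mX : measurable_fibers X) (mY : measurable_fibers Y).

Lemma markov_joint m x y : 0 < P [set w | M w = m /\ X w = x] ->
  P [set w | X w = x /\ Y w = y] =
  (fine (P [set w | M w = m /\ X w = x /\ Y w = y]) * fine (P [set w | X w = x])
   / fine (P [set w | M w = m /\ X w = x]))%:E.
Proof.
have [p2 E2] := measure_fin_numE (measurable_fiberI m x mM mX).
have [p3 E3] : exists r, P [set w | M w = m /\ X w = x /\ Y w = y] = r%:E.
  by apply: measure_fin_numE; apply: measurableI; [exact: mM | exact: measurable_fiberI].
have [px EX] := measure_fin_numE (mX x).
rewrite E2 E3 EX lte_fin /= => p2_gt0; have := markovMXY m x y.
rewrite E2 E3 EX -EFinM.
case: (P _) => [r | | ]; rewrite ?gt0_muley ?gt0_muleNy ?lte_fin //.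
by rewrite -EFinM => /eqP; rewrite eqe => /eqP ->; congr EFin; field; rewrite gt_eqF.
Qed.

Lemma markov_proportional m x x' :
  (forall y, P [set w | M w = m /\ X w = x /\ Y w = y] *
             P [set w | M w = m /\ X w = x'] =
             P [set w | M w = m /\ X w = x' /\ Y w = y] *
             P [set w | M w = m /\ X w = x]) ->
  0 < P [set w | M w = m /\ X w = x] -> 0 < P [set w | M w = m /\ X w = x'] ->
  exists c : R, (0 <= c)%R /\ forall y,
    P [set w | X w = x /\ Y w = y] = c%:E * P [set w | X w = x' /\ Y w = y].
Proof.
move=> cross pos pos'; have [px EX] := measure_fin_numE (mX x).
have [px' EX'] := measure_fin_numE (mX x').
have PX_gt0 x0 : 0 < P [set w | M w = m /\ X w = x0] -> 0 < P [set w | X w = x0].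
  move=> pos0; apply: lt_le_trans pos0 _.
  apply: le_measure; rewrite ?inE;
    [exact: measurable_fiberI | exact: mX | by move=> w []].
have := PX_gt0 _ pos'; rewrite EX' lte_fin => px'_gt0.
exists (px / px')%R; split=> [|y].
  by rewrite divr_ge0 // ltW // -lte_fin -EX PX_gt0.
rewrite (markov_joint y pos) (markov_joint y pos') EX EX' -EFinM; congr EFin.
have [p2 E2] := measure_fin_numE (measurable_fiberI m x mM mX).
have [p2' E2'] := measure_fin_numE (measurable_fiberI m x' mM mX).
have m3 x0 : measurable [set w | M w = m /\ X w = x0 /\ Y w = y].
  by apply: measurableI; [exact: mM | exact: measurable_fiberI].
have [[p3 E3] [p3' E3']] := (measure_fin_numE (m3 x), measure_fin_numE (m3 x')).
move: pos pos' (cross y); rewrite E2 E2' E3 E3' !lte_fin -!EFinM /=.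
move=> p2_gt0 p2'_gt0 /eqP; rewrite eqe => /eqP cr.
rewrite -[p3](mulfK (lt0r_neq0 p2'_gt0)) cr; field.
by rewrite !gt_eqF.
Qed.

End Markov.

Lemma cond_entropy_eq0_of_markov (A : finType) (B : choiceType) (C : Type)
  (M : T -> B) (X : T -> A) (Y : T -> C) :
  markov P M X Y ->
  measurable_fibers M -> measurable_fibers X -> measurable_fibers Y ->
  (forall m, exists (alpha : A -> \bar R) (g : C -> \bar R) (G : \bar R),
     (forall x y, P [set w | M w = m /\ X w = x /\ Y w = y] = alpha x * g y) /\
     (forall x, P [set w | M w = m /\ X w = x] = alpha x * G)) ->
  (forall x x', (exists c : R, (0 <= c)%R /\ forall y,
     P [set w | X w = x /\ Y w = y] = c%:E * P [set w | X w = x' /\ Y w = y]) ->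
     x = x') ->
  cond_entropy P X M = 0.
Proof.
move=> mkv mM mX mY fact nf; apply: cond_entropy_eq0 => // m x x'.
have swap x0 : [set w | X w = x0 /\ M w = m] = [set w | M w = m /\ X w = x0].
  by apply/seteqP; split=> w [].
rewrite !swap => pos pos'; apply/nf/(markov_proportional mkv mM mX mY _ pos pos') => y.
have [alpha [g [G [E3 E2]]]] := fact m.
by rewrite !E3 !E2 muleACA [RHS]muleACA (muleC (alpha x')).
Qed.

End DiscreteRandomVariables.

Lemma measurable_implies d (T : measurableType d) (K : Prop) (S : set T) :
  measurable S -> measurable [set x | K -> S x].
Proof.
move=> mS; have [k | nk] := pselect K.
  by rewrite (_ : [set x | K -> S x] = S) //; apply/seteqP; split=> x //=; exact.
by rewrite (_ : [set x | K -> S x] = setT) //; apply/seteqP; split=> x //= _ /nk.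
Qed.

Lemma measurable_forall d (T : measurableType d) (F : nat -> set T) :
  (forall n, measurable (F n)) -> measurable [set x | forall n, F n x].
Proof.
move=> mF; rewrite (_ : [set x | _] = \bigcap_n F n); first exact: bigcapT_measurable.
by apply/seteqP; split=> x /= Fx n //; exact: Fx.
Qed.

Lemma measurable_propI d (T : measurableType d) (K : Prop) (S : set T) :
  measurable S -> measurable [set x | K /\ S x].
Proof.
move=> mS; have [k | nk] := pselect K.
  by rewrite (_ : [set x | K /\ S x] = S) //; apply/seteqP; split=> x /= => [[] | ].
by rewrite (_ : [set x | K /\ S x] = set0) //; apply/seteqP; split=> x //= [].
Qed.

Lemma pair_eqE (A B : Type) (a a' : A) (b b' : B) :
  ((a, b) = (a', b')) = (a = a' /\ b = b').
Proof. by apply/propext; split=> [[-> ->] | [-> ->]]. Qed.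

Definition opt_match {V : Type} (o : option V) (v : V) : Prop :=
  if o is Some x then v = x else True.

Definition links3 (m : seq bool * seq bool * seq bool) (l : link) : seq bool :=
  match l with L12 => m.1.1 | L23 => m.1.2 | L31 => m.2 end.

Section ProtocolEvents.
Context {R : realType} {d : measure_display} {T : measurableType d}
  (P : probability T R) {dU : measure_display} {U : measurableType dU}
  (rnd : party -> T -> U) {Out : party -> finType} (Pi : protocol U Out).
Hypothesis wf : wf_protocol Pi.

Definition decode l (m : seq bool) : seq (seq bool) :=
  xget [::] [set H | complete_hist Pi l H /\ flatten H = m].

Definition decodable l m : Prop :=
  complete_hist Pi l (decode l m) /\ flatten (decode l m) = m.

(* Each link is checked by exactly one of its endpoints. *)
Definition owned_link s : link :=
  match s with Alice => L12 | Bob => L23 | Charlie => L31 end.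

Definition view_event s (m : link -> seq bool) (q : option (Out s)) : set U :=
  let h1 := decode (lnk1 s) (m (lnk1 s)) in let h2 := decode (lnk2 s) (m (lnk2 s)) in
  [set r | decodable (owned_link s) (m (owned_link s)) /\
           consistent Pi s r h1 h2 /\ opt_match q (out Pi s r h1 h2)].

Arguments view_event : clear implicits.

Definition rect m qA qB qC : set T :=
  [set w | view_event Alice m qA (rnd Alice w) /\ view_event Bob m qB (rnd Bob w) /\
           view_event Charlie m qC (rnd Charlie w)].

Definition terminates : set T :=
  [set w | exists t, terminated Pi (fun j => rnd j w) t].

Lemma decode_transcript w l : terminates w ->
  decode l (rv_tr rnd Pi l w) = final_hist Pi (fun j => rnd j w) l.
Proof.
move=> Tw; have [compH _] := terminating_run_spec wf Tw.
apply: xget_unique; first by split.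
by move=> H [compH' flatH']; apply: (complete_hist_flatten_inj (wf.1 l)).
Qed.

Lemma rectE m qA qB qC w : rect m qA qB qC w <->
  [/\ terminates w, forall l, rv_tr rnd Pi l w = m l,
      opt_match qA (rv_out rnd Pi Alice w), opt_match qB (rv_out rnd Pi Bob w) &
      opt_match qC (rv_out rnd Pi Charlie w)].
Proof.
split=> [[[dA [cA oA]] [[dB [cB oB]] [dC [cC oC]]]] | [Tw Em oA oB oC]].
  have compH l : complete_hist Pi l (decode l (m l)).
    by case: l; [case: dA | case: dB | case: dC].
  have consH s : consistent Pi s (rnd s w)
      (decode (lnk1 s) (m (lnk1 s))) (decode (lnk2 s) (m (lnk2 s))).
    by case: s.
  have [Tw EH] := (run_spec (fun j => rnd j w) (fun l => decode l (m l)) wf).2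
    (conj compH consH).
  have Etr l : rv_tr rnd Pi l w = m l.
    by rewrite /rv_tr /transcript EH; case: l; [case: dA | case: dB | case: dC].
  by split=> //; rewrite /rv_out /output !EH.
have EH l : decode l (m l) = final_hist Pi (fun j => rnd j w) l.
  by rewrite -Em decode_transcript.
have [compH consH] := terminating_run_spec wf Tw.
have dec l : decodable l (m l) by rewrite /decodable EH -Em; split.
rewrite /rect /view_event /= !EH.
by split; [|split]; (split; [exact: dec | split; [exact: consH | assumption]]).
Qed.

Hypotheses (mrnd : forall i, measurable_fun setT (rnd i))
  (mPi : measurable_protocol Pi).

Lemma measurable_rnd_preimage s (S : set U) :
  measurable S -> measurable [set w | S (rnd s w)].
Proof. by move=> mS; have := mrnd s measurableT mS; rewrite setTI. Qed.

Lemma measurable_consistent s h1 h2 : measurable [set r | consistent Pi s r h1 h2].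
Proof.
by apply: measurable_forall => t; do 2 apply: measurable_implies; exact: mPi.1.
Qed.

Lemma measurable_opt_match_out s q h1 h2 :
  measurable [set r | opt_match q (out Pi s r h1 h2)].
Proof. by case: q => [x|]; [exact: mPi.2 | exact: measurableT]. Qed.

Lemma measurable_view_event s m q : measurable (view_event s m q).
Proof.
apply/measurable_propI/measurableI;
  [exact: measurable_consistent | exact: measurable_opt_match_out].
Qed.

Lemma measurable_rect m qA qB qC : measurable (rect m qA qB qC).
Proof.
by apply: measurableI; [|apply: measurableI];
  apply: measurable_rnd_preimage; exact: measurable_view_event.
Qed.

Lemma measurable_terminates : measurable terminates.
Proof.
rewrite (_ : terminates =
    \bigcup_(m : seq bool * seq bool * seq bool) rect (links3 m) None None None).
  by apply: countable_bigcupT_measurable => // m; exact: measurable_rect.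
apply/seteqP; split=> [w Tw | w [m _ /rectE []] //].
exists (rv_tr rnd Pi L12 w, rv_tr rnd Pi L23 w, rv_tr rnd Pi L31 w) => //.
by apply/rectE; split=> //; case.
Qed.

(* A run that never terminates has empty final histories: [xget] falls back
   to time [0]. *)
Lemma final_hist_nonterminating w l : ~ terminates w ->
  final_hist Pi (fun j => rnd j w) l = [::].
Proof. by move=> nT; rewrite /final_hist xgetPN // => t Tt; apply: nT; exists t. Qed.

Definition event (o12 o23 o31 : option (seq bool)) qA qB qC : set T :=
  [set w | opt_match o12 (rv_tr rnd Pi L12 w) /\ opt_match o23 (rv_tr rnd Pi L23 w) /\
     opt_match o31 (rv_tr rnd Pi L31 w) /\ opt_match qA (rv_out rnd Pi Alice w) /\
     opt_match qB (rv_out rnd Pi Bob w) /\ opt_match qC (rv_out rnd Pi Charlie w)].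

Lemma measurable_event o12 o23 o31 qA qB qC :
  measurable (event o12 o23 o31 qA qB qC).
Proof.
pose on_empty_run := [set w | opt_match o12 [::] /\ opt_match o23 [::] /\
  opt_match o31 [::] /\ opt_match qA (out Pi Alice (rnd Alice w) [::] [::]) /\
  opt_match qB (out Pi Bob (rnd Bob w) [::] [::]) /\
  opt_match qC (out Pi Charlie (rnd Charlie w) [::] [::])].
rewrite (_ : event _ _ _ _ _ _ = (\bigcup_(m : seq bool * seq bool * seq bool)
    [set w | opt_match o12 m.1.1 /\ opt_match o23 m.1.2 /\ opt_match o31 m.2 /\
             rect (links3 m) qA qB qC w]) `|` (~` terminates `&` on_empty_run)).
  apply: measurableU.
    apply: countable_bigcupT_measurable => // m.
    by do 3!apply: measurable_propI; exact: measurable_rect.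
  apply: measurableI; first exact/measurableC/measurable_terminates.
  do 3!apply: measurable_propI.
  by apply: measurableI; [|apply: measurableI];
    exact: measurable_rnd_preimage _ (measurable_opt_match_out _ _ _).
apply/seteqP; split=> w Ew; last first.
  case: Ew => [[m _ [E12 [E23 [E31 /rectE [_ Em EA EB EC]]]]] | [nTw]].
    by rewrite /event /= !Em.
  by rewrite /event /= /rv_tr /rv_out /transcript /output !final_hist_nonterminating.
have [Tw | nTw] := pselect (terminates w); [left | right].
  exists (rv_tr rnd Pi L12 w, rv_tr rnd Pi L23 w, rv_tr rnd Pi L31 w) => //=.
  case: Ew => E12 [E23 [E31 [EA [EB EC]]]]; do 3!split=> //.
  by apply/rectE; split=> //; case.
split=> //; move: Ew.
by rewrite /event /= /rv_tr /rv_out /transcript /output !final_hist_nonterminating.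
Qed.

Ltac event_ext := apply/seteqP; split=> w /=;
  rewrite /event /opt_match /= ?pair_eqE; tauto.

Lemma measurable_fibers_tr l : measurable_fibers (rv_tr rnd Pi l).
Proof.
move=> a; rewrite (_ : [set w | _] = event (if l is L12 then Some a else None)
    (if l is L23 then Some a else None) (if l is L31 then Some a else None)
    None None None); first exact: measurable_event.
by case: l; event_ext.
Qed.

Lemma measurable_fibers_out i : measurable_fibers (rv_out rnd Pi i).
Proof.
case: i => x.
- rewrite (_ : [set w | _] = event None None None (Some x) None None).
    exact: measurable_event.
  by event_ext.
- rewrite (_ : [set w | _] = event None None None None (Some x) None).
    exact: measurable_event.
  by event_ext.
- rewrite (_ : [set w | _] = event None None None None None (Some x)).
    exact: measurable_event.
  by event_ext.
Qed.

Hypotheses (indep : forall S1 S2 S3 : set U,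
    measurable S1 -> measurable S2 -> measurable S3 ->
    P [set w | S1 (rnd Alice w) /\ S2 (rnd Bob w) /\ S3 (rnd Charlie w)] =
    (P [set w | S1 (rnd Alice w)] * P [set w | S2 (rnd Bob w)] *
     P [set w | S3 (rnd Charlie w)])%E)
  (P_terminates : P terminates = 1%E).
Local Open Scope ereal_scope.

Lemma measure_terminatesI F : measurable F -> P F = P (F `&` terminates).
Proof.
move=> mF; rewrite (measureDI P mF measurable_terminates).
rewrite [X in X + _](_ : _ = 0) ?add0e //.
have mT := measurable_terminates.
apply: (subset_measure0 (B := ~` terminates)).
- exact: measurableD.
- exact: measurableC.
- by move=> w [].
- by have := probability_setC P mT; rewrite P_terminates subee.
Qed.

Definition view_prob s m q : \bar R := P [set w | view_event s m q (rnd s w)].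
Arguments view_prob : clear implicits.

Lemma view_prob_fin s m q : view_prob s m q \is a fin_num.
Proof. by apply/fin_num_measure/measurable_rnd_preimage/measurable_view_event. Qed.

Lemma measure_rect m qA qB qC : P (rect m qA qB qC) =
  view_prob Alice m qA * view_prob Bob m qB * view_prob Charlie m qC.
Proof. by rewrite /rect indep //; exact: measurable_view_event. Qed.

Lemma measure_event_full a b c qA qB qC :
  P (event (Some a) (Some b) (Some c) qA qB qC) =
  P (rect (links3 (a, b, c)) qA qB qC).
Proof.
rewrite measure_terminatesI; last exact: measurable_event.
congr (P _).
apply/seteqP; split=> [w [[E12 [E23 [E31 [EA [EB EC]]]]] Tw] | w /rectE[Tw Em EA EB EC]].
  by apply/rectE; split=> //; case.
by split=> //; rewrite /event /= !Em.
Qed.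

(* A party's view ignores the link it is not attached to, hence the placeholder
   [[::]] in the factor pulled out of the sum. *)
Lemma measure_event_Alice a c qA qB qC :
  P (event (Some a) None (Some c) qA qB qC) =
  view_prob Alice (links3 (a, [::], c)) qA *
  csum (fun b => view_prob Bob (links3 (a, b, c)) qB *
                 view_prob Charlie (links3 (a, b, c)) qC).
Proof.
rewrite (measure_csum_fibers P (measurable_fibers_tr L23)); last exact: measurable_event.
rewrite -csumZl ?view_prob_fin // => [|b]; last exact: mule_ge0.
congr csum; apply/funext => b.
rewrite (_ : _ `&` _ = event (Some a) (Some b) (Some c) qA qB qC); last by event_ext.
by rewrite measure_event_full measure_rect -muleA.
Qed.

Lemma measure_event_Bob a b qA qB qC :
  P (event (Some a) (Some b) None qA qB qC) =
  view_prob Bob (links3 (a, b, [::])) qB *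
  csum (fun c => view_prob Alice (links3 (a, b, c)) qA *
                 view_prob Charlie (links3 (a, b, c)) qC).
Proof.
rewrite (measure_csum_fibers P (measurable_fibers_tr L31)); last exact: measurable_event.
rewrite -csumZl ?view_prob_fin // => [|c]; last exact: mule_ge0.
congr csum; apply/funext => c.
rewrite (_ : _ `&` _ = event (Some a) (Some b) (Some c) qA qB qC); last by event_ext.
by rewrite measure_event_full measure_rect (muleC (view_prob Alice _ _)) -muleA.
Qed.

Lemma measure_event_Charlie b c qA qB qC :
  P (event None (Some b) (Some c) qA qB qC) =
  view_prob Charlie (links3 ([::], b, c)) qC *
  csum (fun a => view_prob Alice (links3 (a, b, c)) qA *
                 view_prob Bob (links3 (a, b, c)) qB).
Proof.
rewrite (measure_csum_fibers P (measurable_fibers_tr L12)); last exact: measurable_event.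
rewrite -csumZl ?view_prob_fin // => [|a]; last exact: mule_ge0.
congr csum; apply/funext => a.
rewrite (_ : _ `&` _ = event (Some a) (Some b) (Some c) qA qB qC); last by event_ext.
by rewrite measure_event_full measure_rect muleC.
Qed.

Variable p : Out Alice -> Out Bob -> Out Charlie -> R.
Hypotheses (p_normal : normal_form p) (Pi_secure : secure_sampling P rnd Pi p).

Lemma cond_entropy_out_Alice : cond_entropy P (rv_out rnd Pi Alice)
  (fun w => (rv_tr rnd Pi L12 w, rv_tr rnd Pi L31 w)) = 0.
Proof.
have [nfA _ _] := p_normal; have [law mkv _ _] := Pi_secure.
apply: (cond_entropy_eq0_of_markov mkv).
- by apply: measurable_fibers_pair; exact: measurable_fibers_tr.
- exact: measurable_fibers_out.
- by apply: measurable_fibers_pair; exact: measurable_fibers_out.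
- move=> [a c]; exists (fun x => view_prob Alice (links3 (a, [::], c)) (Some x)),
    (fun yz => csum (fun b => view_prob Bob (links3 (a, b, c)) (Some yz.1) *
                              view_prob Charlie (links3 (a, b, c)) (Some yz.2))),
    (csum (fun b => view_prob Bob (links3 (a, b, c)) None *
                    view_prob Charlie (links3 (a, b, c)) None)).
  by split=> [x [y z] | x]; rewrite -measure_event_Alice; congr (P _); event_ext.
move=> x x' [c [c_ge0 Ec]]; apply: nfA; exists c; split=> // y z.
have lawA x0 : P [set w | rv_out rnd Pi Alice w = x0 /\
    (rv_out rnd Pi Bob w, rv_out rnd Pi Charlie w) = (y, z)] = (p x0 y z)%:E.
  by rewrite -law; congr (P _); event_ext.
by apply/EFin_inj; rewrite EFinM -!lawA Ec.
Qed.

Lemma cond_entropy_out_Bob : cond_entropy P (rv_out rnd Pi Bob)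
  (fun w => (rv_tr rnd Pi L12 w, rv_tr rnd Pi L23 w)) = 0.
Proof.
have [_ nfB _] := p_normal; have [law _ mkv _] := Pi_secure.
apply: (cond_entropy_eq0_of_markov mkv).
- by apply: measurable_fibers_pair; exact: measurable_fibers_tr.
- exact: measurable_fibers_out.
- by apply: measurable_fibers_pair; exact: measurable_fibers_out.
- move=> [a b]; exists (fun y => view_prob Bob (links3 (a, b, [::])) (Some y)),
    (fun xz => csum (fun c => view_prob Alice (links3 (a, b, c)) (Some xz.1) *
                              view_prob Charlie (links3 (a, b, c)) (Some xz.2))),
    (csum (fun c => view_prob Alice (links3 (a, b, c)) None *
                    view_prob Charlie (links3 (a, b, c)) None)).
  by split=> [y [x z] | y]; rewrite -measure_event_Bob; congr (P _); event_ext.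
move=> y y' [c [c_ge0 Ec]]; apply: nfB; exists c; split=> // x z.
have lawB y0 : P [set w | rv_out rnd Pi Bob w = y0 /\
    (rv_out rnd Pi Alice w, rv_out rnd Pi Charlie w) = (x, z)] = (p x y0 z)%:E.
  by rewrite -law; congr (P _); event_ext.
by apply/EFin_inj; rewrite EFinM -!lawB Ec.
Qed.

Lemma cond_entropy_out_Charlie : cond_entropy P (rv_out rnd Pi Charlie)
  (fun w => (rv_tr rnd Pi L23 w, rv_tr rnd Pi L31 w)) = 0.
Proof.
have [_ _ nfC] := p_normal; have [law _ _ mkv] := Pi_secure.
apply: (cond_entropy_eq0_of_markov mkv).
- by apply: measurable_fibers_pair; exact: measurable_fibers_tr.
- exact: measurable_fibers_out.
- by apply: measurable_fibers_pair; exact: measurable_fibers_out.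
- move=> [b c]; exists (fun z => view_prob Charlie (links3 ([::], b, c)) (Some z)),
    (fun xy => csum (fun a => view_prob Alice (links3 (a, b, c)) (Some xy.1) *
                              view_prob Bob (links3 (a, b, c)) (Some xy.2))),
    (csum (fun a => view_prob Alice (links3 (a, b, c)) None *
                    view_prob Bob (links3 (a, b, c)) None)).
  by split=> [z [x y] | z]; rewrite -measure_event_Charlie; congr (P _); event_ext.
move=> z z' [c [c_ge0 Ec]]; apply: nfC; exists c; split=> // x y.
have lawC z0 : P [set w | rv_out rnd Pi Charlie w = z0 /\
    (rv_out rnd Pi Alice w, rv_out rnd Pi Bob w) = (x, y)] = (p x y z0)%:E.
  by rewrite -law; congr (P _); event_ext.
by apply/EFin_inj; rewrite EFinM -!lawC Ec.
Qed.

End ProtocolEvents.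

Theorem lemma6 (R : realType) (d : measure_display) (T : measurableType d)
  (P : probability T R) (dU : measure_display) (U : measurableType dU)
  (rnd : party -> T -> U) (Out : party -> finType) (Pi : protocol U Out)
  (p : Out Alice -> Out Bob -> Out Charlie -> R) :
  is_distribution p -> normal_form p ->
  protocol_setting P rnd Pi -> secure_sampling P rnd Pi p ->
  [/\ cond_entropy P (rv_out rnd Pi Alice)
        (fun w => (rv_tr rnd Pi L12 w, rv_tr rnd Pi L31 w)) = 0%E,
      cond_entropy P (rv_out rnd Pi Bob)
        (fun w => (rv_tr rnd Pi L12 w, rv_tr rnd Pi L23 w)) = 0%E &
      cond_entropy P (rv_out rnd Pi Charlie)
        (fun w => (rv_tr rnd Pi L23 w, rv_tr rnd Pi L31 w)) = 0%E].
Proof.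
(* [is_distribution p] already follows from the first clause of [secure_sampling]. *)
move=> _ nf [mrnd indep mPi wf Pterm] ss.
split; [exact: (cond_entropy_out_Alice wf mrnd mPi indep Pterm nf ss)
  | exact: (cond_entropy_out_Bob wf mrnd mPi indep Pterm nf ss)
  | exact: (cond_entropy_out_Charlie wf mrnd mPi indep Pterm nf ss)].
Qed.
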